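(* Let $\tau_i\in\tau_H$ be a HI-task in the multi-rate fluid model, let $k_i$ be its earliest completion window, and let $R_i=\theta_{i,k_i}^H$ if $k_i\le n_H$ and $R_i=\theta_i^H$ if $k_i=n_H+1$. If $$\sum_{j:1\le j<k_i}\theta_{i,j}^H w_j + R_i\Big(T_i - C_i^L/\theta_i^L - \sum_{j:1\le j<k_i} w_j\Big)\ \ge\ C_i^H-C_i^L,$$ $$\forall j:\ k_i\le j\le n_H,\quad \theta_i^L\le\theta_{i,j}^H,\qquad\text{and}\qquad \theta_i^L\le\theta_i^H,$$ then every carry-over job of $\tau_i$ meets its deadline in the HI-mode (i.e., receives a total of $C_i^H$ units of execution by its deadline).
   Context: A dual-criticality implicit-deadline sporadic task system $\tau$ runs on $m$ identical processors. Each task $\tau_i=(T_i,\chi_i,C_i^L,C_i^H)$ has period and relative deadline $T_i>0$, criticality $\chi_i\in\{LO,HI\}$, and WCETs $C_i^L\le C_i^H$ ($C_i^L=C_i^H$ for LO-tasks); $u_i^L=C_i^L/T_i\le1$, $u_i^H=C_i^H/T_i\le1$. $\tau_H$ is the set of HI-tasks and $n_H=|\tau_H|$. The system starts in LO-mode; the mode switch occurs at the first instant a job of some HI-task $\tau_i$ has executed $C_i^L$ units without completing; from then on the system is in HI-mode, all LO-task jobs are discarded, and every HI-task job must receive $C_i^H$ units by its deadline. No HI-job needs more than $C_i^H$ units. Multi-rate fluid model (executing at rate $\theta$ means receiving $\theta\ell$ units of execution in any interval of length $\ell$): in LO-mode every job of $\tau_i$ executes at rate $\theta_i^L\in(0,1]$;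 measuring time from the mode switch, the transition period $[0,\sum_{j=1}^{n_H}w_j)$ is divided into consecutive windows of fixed durations $w_1,\dots,w_{n_H}\ge0$, window $j$ being $[\sum_{l<j}w_l,\sum_{l\le j}w_l)$, during which each job of HI-task $\tau_i$ executes at rate $\theta_{i,j}^H\in[0,1]$; after the transition period it executes at rate $\theta_i^H\in(0,1]$. A carry-over job of $\tau_i$ is a job released before the mode switch that has not completed at the mode switch. The earliest completion window of $\tau_i$ is the largest index $k_i\in\{1,\dots,n_H+1\}$ such that $\sum_{j:1\le j<k_i}w_j<T_i-C_i^L/\theta_i^L$ (so that, if $k_i\le n_H$, $\sum_{j:1\le j\le k_i}w_j\ge T_i-C_i^L/\theta_i^L$). *)

From HB Require Import structures.
From mathcomp Require Import all_boot all_order all_algebra.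
From mathcomp Require Import reals.
Set Implicit Arguments. Unset Strict Implicit. Unset Printing Implicit Defensive.
Import Order.TTheory GRing.Theory Num.Theory.
Local Open Scope ring_scope.

(* Windows are indexed 1..nH; w j is the duration of window j.
   win_start w j = sum_{1 <= l < j} w_l : start time of window j
   (measured from the mode switch); win_start w (nH+1) is the end of the
   transition period. *)
Definition win_start {R : realType} (w : nat -> R) (j : nat) : R :=
  \sum_(1 <= l < j) w l.

(* Total execution received in HI-mode during [0, t] by a job of a HI-task
   that executes (fluid model) at rate th j in window j (1 <= j <= nH) and at
   rate thH after the transition period. This is the integral of the
   piecewise-constant rate function over [0, t] (for t >= 0). *)
Definition hi_service {R : realType} (nH : nat) (w th : nat -> R) (thH t : R)
  : R :=
  \sum_(1 <= j < nH.+1)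
     th j * Num.max 0 (Num.min (win_start w j.+1) t - win_start w j)
  + thH * Num.max 0 (t - win_start w nH.+1).

Definition ecw_cond {R : realType} (nH : nat) (w : nat -> R) (T CL thL : R)
  (k : nat) : Prop :=
  (1 <= k <= nH.+1)%N /\ win_start w k < T - CL / thL.

Definition earliest_completion_window {R : realType} (nH : nat) (w : nat -> R)
  (T CL thL : R) (k : nat) : Prop :=
  ecw_cond nH w T CL thL k /\
  (forall k', ecw_cond nH w T CL thL k' -> (k' <= k)%N).

From HB Require Import structures.
From mathcomp Require Import all_boot all_order all_algebra.
From mathcomp Require Import reals.
From mathcomp Require Import ring lra zify.
Set Implicit Arguments. Unset Strict Implicit. Unset Printing Implicit Defensive.
Import Order.TTheory GRing.Theory Num.Theory.
Local Open Scope ring_scope.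

(* The carry-over job runs at rate thL in LO-mode without triggering the
   switch, so at the switch it is at most CL/thL old and its deadline r + T is
   at least s := T - CL/thL.  The HI-mode service is piecewise linear in time:
   at s it is exactly the left-hand side of the schedulability condition,
   hence at least CH - CL, and on [s, r + T] every window still open runs at
   rate at least thL, which adds thL (r + T - s) = thL r + CL.  With the
   thL (-r) units received before the switch this gives CH. *)

Section Overlap.
Variable R : realDomainType.

Definition overlap (a b t : R) : R := Num.max 0 (Num.min b t - a).

Lemma overlap_before a b t : a <= b -> t <= a -> overlap a b t = 0.
Proof.
by move=> lab lta; rewrite /overlap min_r ?max_l ?subr_le0 //; apply: le_trans lab.
Qed.

Lemma overlap_within a b t : a <= t <= b -> overlap a b t = t - a.
Proof. by case/andP=> lat ltb; rewrite /overlap min_r ?max_r ?subr_ge0. Qed.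

Lemma overlap_after a b t : a <= b -> b <= t -> overlap a b t = b - a.
Proof. by move=> lab lbt; rewrite /overlap min_l ?max_r ?subr_ge0. Qed.

Lemma le_overlap a b s t : s <= t -> overlap a b s <= overlap a b t.
Proof. by move=> lst; rewrite le_max2 ?lerB ?le_min2. Qed.

Lemma overlap_cat a b c t :
  a <= b -> b <= c -> overlap a b t + overlap b c t = overlap a c t.
Proof.
move=> lab lbc; have lac := le_trans lab lbc.
have [lta|lat] := leP t a.
  have ltb := le_trans lta lab.
  by rewrite !overlap_before ?addr0.
have [ltb|lbt] := leP t b.
  rewrite (overlap_before lbc ltb) addr0.
  by rewrite !overlap_within ?(ltW lat) ?ltb ?(le_trans ltb lbc).
have [ltc|lct] := leP t c.
  rewrite (overlap_after lab (ltW lbt)) !overlap_within ?(ltW lat) ?(ltW lbt) ?ltc //.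
  lra.
rewrite (overlap_after lab (ltW lbt)) (overlap_after lbc (ltW lct)).
rewrite (overlap_after lac (ltW lct)); lra.
Qed.

End Overlap.

Section Windows.
Variables (R : realType) (nH : nat) (w : nat -> R).
Hypothesis w_ge0 : forall j, (1 <= j <= nH)%N -> 0 <= w j.

Lemma hi_serviceE th thH t : hi_service nH w th thH t =
  \sum_(1 <= j < nH.+1) th j * overlap (win_start w j) (win_start w j.+1) t
  + thH * Num.max 0 (t - win_start w nH.+1).
Proof. by []. Qed.

Lemma win_start1 : win_start w 1 = 0.
Proof. by rewrite /win_start big_geq. Qed.

Lemma win_startS j : (1 <= j)%N -> win_start w j.+1 = win_start w j + w j.
Proof. by move=> j_ge1; rewrite /win_start big_nat_recr. Qed.

Lemma win_start_le i j :
  (1 <= i <= j)%N -> (j <= nH.+1)%N -> win_start w i <= win_start w j.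
Proof.
case/andP=> i_ge1 lij j_le.
rewrite /win_start [leRHS](big_cat_nat _ lij) //= lerDl.
rewrite big_nat_cond; apply: sumr_ge0 => l /andP[/andP[l_ge l_lt] _].
by apply: w_ge0; lia.
Qed.

Lemma win_start_ge0 j : (j <= nH.+1)%N -> 0 <= win_start w j.
Proof.
case: j => [|j] j_le; first by rewrite /win_start big_geq.
by rewrite -win_start1 win_start_le.
Qed.

Lemma hi_service_unit_rate t : 0 <= t -> hi_service nH w (fun=> 1) 1 t = t.
Proof.
move=> t_ge0.
have telescope m : (m <= nH)%N ->
    \sum_(1 <= j < m.+1) overlap (win_start w j) (win_start w j.+1) t
    = overlap 0 (win_start w m.+1) t.
  elim: m => [|m IH] m_le.
    by rewrite big_geq // win_start1 overlap_after ?subrr.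
  rewrite big_nat_recr //= IH 1?ltnW // (@overlap_cat _ _ (win_start w m.+1)) //.
    by rewrite win_start_ge0 //; lia.
  by rewrite win_start_le //; lia.
rewrite hi_serviceE mul1r.
under eq_bigr do rewrite mul1r.
rewrite telescope // -/(overlap _ _ _).
have end_ge0 := @win_start_ge0 nH.+1 (leqnn _).
have [t_le|t_gt] := leP t (win_start w nH.+1).
  by rewrite overlap_within ?t_ge0 // max_l ?subr_le0 // subr0 addr0.
rewrite (overlap_after end_ge0 (ltW t_gt)) max_r ?subr_ge0 ?(ltW t_gt) //.
by rewrite subr0 addrC subrK.
Qed.

Lemma hi_serviceB th thH s t :
  hi_service nH w th thH t - hi_service nH w th thH s =
  \sum_(1 <= j < nH.+1) th j * (overlap (win_start w j) (win_start w j.+1) t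
                                 - overlap (win_start w j) (win_start w j.+1) s)
  + thH * (Num.max 0 (t - win_start w nH.+1) - Num.max 0 (s - win_start w nH.+1)).
Proof.
rewrite !hi_serviceE opprD addrACA -sumrB mulrBr.
by congr (_ + _); apply: eq_bigr => j _; rewrite mulrBr.
Qed.

Lemma hi_service_increment th thH rho s t :
  0 <= s <= t -> rho <= thH ->
  (forall j, (1 <= j <= nH)%N -> s < win_start w j.+1 -> rho <= th j) ->
  rho * (t - s) <= hi_service nH w th thH t - hi_service nH w th thH s.
Proof.
case/andP=> s_ge0 lst rho_le_thH rho_le_th.
(* Compare with unit rates window by window: their service is elapsed time. *)
have -> : t - s = hi_service nH w (fun=> 1) 1 t - hi_service nH w (fun=> 1) 1 s.
  by rewrite !hi_service_unit_rate // (le_trans s_ge0).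
rewrite !hi_serviceB mulrDr mulr_sumr; apply: lerD.
  apply: ler_sum_nat => j /andP[j_ge1 j_lt]; rewrite mul1r.
  have [s_lt|end_le_s] := ltP s (win_start w j.+1).
    by apply: ler_wpM2r; rewrite ?subr_ge0 ?le_overlap ?rho_le_th ?j_ge1.
  have start_le : win_start w j <= win_start w j.+1 by apply: win_start_le; lia.
  by rewrite !(overlap_after start_le) ?subrr ?mulr0 // (le_trans end_le_s).
by rewrite mul1r ler_wpM2r // subr_ge0 le_max2 // lerB.
Qed.

Lemma hi_service_in_window th thH k s :
  (1 <= k <= nH.+1)%N -> win_start w k <= s ->
  ((k <= nH)%N -> s <= win_start w k.+1) ->
  hi_service nH w th thH s = \sum_(1 <= j < k) th j * w j
    + (if (k <= nH)%N then th k else thH) * (s - win_start w k).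
Proof.
case/andP=> k_ge1 k_le start_le_s s_le_end.
have full j : (1 <= j < k)%N -> overlap (win_start w j) (win_start w j.+1) s = w j.
  case/andP=> j_ge1 j_lt.
  have start_le : win_start w j <= win_start w j.+1 by apply: win_start_le; lia.
  rewrite overlap_after //; last first.
    by apply: le_trans start_le_s; apply: win_start_le; lia.
  by rewrite win_startS // addrAC subrr add0r.
rewrite hi_serviceE (big_cat_nat k_ge1 k_le) /=.
rewrite (eq_big_nat _ _ (fun j jk => congr1 _ (full j jk))) -addrA.
congr (_ + _); case: leqP => [k_le_nH|k_gt_nH].
  have end_le : win_start w k.+1 <= win_start w nH.+1 by apply: win_start_le; lia.
  rewrite big_ltn // overlap_within ?start_le_s ?s_le_end //.
  rewrite big_nat_cond big1 => [|j /andP[/andP[j_gt j_le] _]].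
    by rewrite max_l ?mulr0 ?addr0 // subr_le0 (le_trans (s_le_end _)).
  have start_le : win_start w j <= win_start w j.+1 by apply: win_start_le; lia.
  rewrite overlap_before ?mulr0 //.
  by apply: le_trans (s_le_end _) _ => //; apply: win_start_le; lia.
have k_eq : k = nH.+1 by apply/eqP; rewrite eqn_leq k_le.
by rewrite k_eq big_geq // add0r max_r // subr_ge0 -k_eq.
Qed.

End Windows.

Lemma earliest_completion_window_bracket (R : realType) nH (w : nat -> R)
    T CL thL k :
  earliest_completion_window nH w T CL thL k ->
  [/\ (1 <= k <= nH.+1)%N, win_start w k < T - CL / thL
    & (k <= nH)%N -> T - CL / thL <= win_start w k.+1].
Proof.
case=> -[k_range k_lt] k_max; split=> // k_le; rewrite leNgt; apply/negP=> lt_end.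
have : (k.+1 <= k)%N by apply: k_max; split=> //; lia.
by rewrite ltnn.
Qed.

Lemma carry_over_age_le (R : realFieldType) (thL CL c r : R) :
  0 < thL -> 0 <= CL -> thL * (0 - r) < c ->
  (forall t, r <= t < 0 -> thL * (t - r) = CL -> c <= thL * (t - r)) ->
  - r <= CL / thL.
Proof.
move=> thL_gt0 CL_ge0 below_c no_switch; rewrite leNgt; apply/negP=> q_lt.
have q_ge0 : 0 <= CL / thL by rewrite divr_ge0 // ltW.
have reach : thL * (r + CL / thL - r) = CL.
  by rewrite addrAC subrr add0r mulrC divfK // gt_eqF.
have c_le : c <= CL.
  by rewrite -reach; apply: no_switch => //; apply/andP; split; lra.
have : thL * (CL / thL) < thL * (0 - r) by rewrite ltr_pM2l // add0r.
rewrite mulrC divfK ?gt_eqF //; lra.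
Qed.

Theorem theorem1 (R : realType) (nH : nat) (T CL CH thL thH : R)
  (th w : nat -> R) (k : nat) (r c : R) :
  (1 <= nH)%N ->
  0 < T -> 0 <= CL -> CL <= CH -> CH <= T ->
  0 < thL <= 1 -> 0 < thH <= 1 ->
  (forall j, (1 <= j <= nH)%N -> 0 <= th j <= 1) ->
  (forall j, (1 <= j <= nH)%N -> 0 <= w j) ->
  earliest_completion_window nH w T CL thL k ->
  let Ri := if (k <= nH)%N then th k else thH in
  \sum_(1 <= j < k) th j * w j
    + Ri * (T - CL / thL - \sum_(1 <= j < k) w j) >= CH - CL ->
  (forall j, (k <= j <= nH)%N -> thL <= th j) ->
  thL <= thH ->
  (* carry-over job of tau_i *)
  r < 0 -> 0 < c <= CH ->
  thL * (0 - r) < c ->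
  (forall t, r <= t < 0 -> thL * (t - r) = CL -> c <= thL * (t - r)) ->
  CH <= thL * (0 - r) + hi_service nH w th thH (r + T).
Proof.
move=> _ _ CL_ge0 _ _ /andP[thL_gt0 _] _ _ w_ge0 ecw Ri service_s thL_le_th
  thL_le_thH _ _ below_c no_switch.
have [k_range start_lt_s s_le_end] := earliest_completion_window_bracket ecw.
have age := carry_over_age_le thL_gt0 CL_ge0 below_c no_switch.
set s := T - CL / thL in start_lt_s s_le_end service_s.
have s_ge0 : 0 <= s.
  apply: le_trans (ltW start_lt_s).
  by apply: (win_start_ge0 w_ge0); case/andP: k_range.
have at_s : CH - CL <= hi_service nH w th thH s.
  by rewrite (hi_service_in_window w_ge0 th thH k_range (ltW start_lt_s) s_le_end).
have after_s : thL * (r + T - s)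
    <= hi_service nH w th thH (r + T) - hi_service nH w th thH s.
  apply: hi_service_increment => //; first by rewrite s_ge0 /s; lra.
  move=> j /andP[j_ge1 j_le] s_lt_end; have [k_le_j|j_lt_k] := leqP k j.
    by apply: thL_le_th; lia.
  have : win_start w j.+1 <= win_start w k by apply: (win_start_le w_ge0); lia.
  lra.
have : thL * (r + T - s) = thL * r + CL by rewrite /s; field; rewrite gt_eqF.
lra.
Qed.
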